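(* For any $(\mu,\varphi,\omega^*,\omega^\varepsilon)\in\mathbb F^\times\times\mathbb F^3$: (i) there exists $(a,b,c,\lambda)\in(\mathbb F^\times)^4$ that is feasible for $(\mu,\varphi,\omega^*,\omega^\varepsilon)$; (ii) if $(a,b,c,\lambda)$ is feasible for $(\mu,\varphi,\omega^*,\omega^\varepsilon)$, then the equivalence class of $(a,b,c,\lambda)$ under $\approx$ consists exactly of all elements of $(\mathbb F^\times)^4$ that are feasible for $(\mu,\varphi,\omega^*,\omega^\varepsilon)$.
   Context: $\mathbb F$ is an algebraically closed field and $q\in\mathbb F^\times$ is a root of unity of order $d\notin\{1,2,4\}$. $\sqrt{x}$ denotes a fixed root of $t^2-x$. $(a,b,c,\lambda)\in(\mathbb F^\times)^4$ is feasible for $(\mu,\varphi,\omega^*,\omega^\varepsilon)\in\mathbb F^\times\times\mathbb F^3$ if $\mu=b\lambda^{-1}$, $\varphi=(c+c^{-1})(\lambda-\lambda^{-1})-(a+a^{-1})(bq-b^{-1}q^{-1})$, $\omega^*=(c+c^{-1})(a+a^{-1})+(b+b^{-1})(\lambda q+\lambda^{-1}q^{-1})$, $\omega^\varepsilon=(a+a^{-1})(b+b^{-1})+(c+c^{-1})(\lambda q+\lambda^{-1}q^{-1})$. $\{\pm1\}$ acts on $(\mathbb F^\times)^4$ by $(-1)\cdot(a,b,c,\lambda)=(-a,-b,-c,-\lambda)$; writing $[\cdot]$ for $\{\pm1\}$-orbits, $\mathfrak S_4$ acts on the right on the orbit set by $[a,b,c,\lambda](1\,2)=[a,b,c^{-1},\lambda]$,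 $[a,b,c,\lambda](3\,4)=[a^{-1},b,c,\lambda]$, $[a,b,c,\lambda](2\,3)=[a/s,b/s,c/s,\lambda/s]$ with $s=\sqrt{abc\lambda q}$. $(a,b,c,\lambda)\approx(\bar a,\bar b,\bar c,\bar\lambda)$ means their $\{\pm1\}$-orbits lie in the same $\mathfrak S_4$-orbit. *)

From HB Require Import structures.
From mathcomp Require Import all_boot all_order all_algebra.
From Stdlib Require Import Relations.Relation_Operators.
Set Implicit Arguments. Unset Strict Implicit. Unset Printing Implicit Defensive.
Import GRing.Theory.
Local Open Scope ring_scope.

Definition quad (F : Type) := (F * F * F * F)%type.

Definition q_a {F} (x : quad F) := x.1.1.1.
Definition q_b {F} (x : quad F) := x.1.1.2.
Definition q_c {F} (x : quad F) := x.1.2.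
Definition q_l {F} (x : quad F) := x.2.

Definition nonzero4 (F : fieldType) (x : quad F) : Prop :=
  [/\ q_a x != 0, q_b x != 0, q_c x != 0 & q_l x != 0].

Definition feasible (F : fieldType) (q : F) (x : quad F)
    (mu phi ws we : F) : Prop :=
  let: (a, b, c, l) := x in
  [/\ mu = b / l,
      phi = (c + c^-1) * (l - l^-1) - (a + a^-1) * (b * q - b^-1 * q^-1),
      ws = (c + c^-1) * (a + a^-1) + (b + b^-1) * (l * q + l^-1 * q^-1)
    & we = (a + a^-1) * (b + b^-1) + (c + c^-1) * (l * q + l^-1 * q^-1)].

(* One generator move of the {±1} x S_4 action on quadruples:
   - the {±1} action (negation of all entries),
   - (1 2): c -> c^-1,
   - (3 4): a -> a^-1,
   - (2 3): divide all entries by a square root s of a b c lambda q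
     (either choice of root; the two choices differ by the {±1} action). *)
Inductive gen_step (F : fieldType) (q : F) : quad F -> quad F -> Prop :=
  | step_neg a b c l : gen_step q (a, b, c, l) (- a, - b, - c, - l)
  | step_12 a b c l : gen_step q (a, b, c, l) (a, b, c^-1, l)
  | step_34 a b c l : gen_step q (a, b, c, l) (a^-1, b, c, l)
  | step_23 a b c l s : s ^+ 2 = a * b * c * l * q ->
      gen_step q (a, b, c, l) (a / s, b / s, c / s, l / s).

(* x ≈ y : the {±1}-orbits of x and y lie in the same S_4-orbit, i.e.
   y is reachable from x by the equivalence closure of the generator moves. *)
Definition approx (F : fieldType) (q : F) : quad F -> quad F -> Prop :=
  clos_refl_sym_trans (quad F) (@gen_step F q).

From HB Require Import structures.
From mathcomp Require Import all_boot all_order all_algebra ring.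
From Stdlib Require Import Relations.Relation_Operators.
Import GRing.Theory.
Local Open Scope ring_scope.
Set Implicit Arguments. Unset Strict Implicit.

(* In the coordinates x1 = c/l, x2 = 1/(c l), x3 = a b q, x4 = b q/a of a quadruple the
   generators (1 2), (2 3), (3 4) act as the transpositions x1 <-> x2, x2 <-> x3, x3 <-> x4,
   the sign change fixes them, and mu = b/l is invariant.  A nonzero quadruple is determined
   up to sign by mu and (x1, x2, x3, x4); feasibility says that mu is prescribed and that the
   x_i are the roots of a quartic determined by (mu, phi, omega*, omega^eps), its coefficients
   being recovered from the data because q^2 + 1 != 0.  As adjacent transpositions generate
   all permutations, the feasible quadruples form a single orbit; it is nonempty because over
   an algebraically closed field the quartic splits and a quadruple with prescribed
   coordinates is rebuilt by extracting one square root. *)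

Definition adjacent_swap_closed (T : Type) (P : seq T -> Prop) :=
  forall s1 x y s2, P (s1 ++ x :: y :: s2) -> P (s1 ++ y :: x :: s2).

Lemma adjacent_swap_closed_cons (T : Type) (z : T) (P : seq T -> Prop) :
  adjacent_swap_closed P -> adjacent_swap_closed (fun s => P (z :: s)).
Proof. by move=> hP s1; apply: (hP (z :: s1)). Qed.

Lemma adjacent_swap_closed_front (T : Type) (P : seq T -> Prop) s1 x s2 :
  adjacent_swap_closed P -> P (s1 ++ x :: s2) -> P (x :: s1 ++ s2).
Proof.
elim: s1 P => [//|z s1 IH] P hP /= /(IH _ (adjacent_swap_closed_cons (z := z) hP)).
exact: (hP [::]).
Qed.

Lemma adjacent_swap_closed_perm (T : eqType) (P : seq T -> Prop) s t :
  adjacent_swap_closed P -> perm_eq s t -> P s -> P t.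
Proof.
elim: t s P => [|y t IH] s P hP; first by move=> /perm_nilP ->.
move=> st; have ys : y \in s by rewrite (perm_mem st) mem_head.
move: st; case/splitPr: ys => s1 s2.
rewrite -[y :: s2]cat1s perm_catCA perm_cons => st.
move=> /(adjacent_swap_closed_front hP).
exact: IH _ _ (adjacent_swap_closed_cons (z := y) hP) st.
Qed.

Lemma prod_XsubC4 (R : comNzRingType) (x1 x2 x3 x4 : R) :
  \prod_(z <- [:: x1; x2; x3; x4]) ('X - z%:P) =
  Poly [:: x1 * x2 * x3 * x4;
           - (x1 * x2 * x3 + x1 * x2 * x4 + x1 * x3 * x4 + x2 * x3 * x4);
           x1 * x2 + x1 * x3 + x1 * x4 + x2 * x3 + x2 * x4 + x3 * x4;
           - (x1 + x2 + x3 + x4); 1].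
Proof.
rewrite !big_cons big_nil /= !cons_poly_def !(rmorphD, rmorphN, rmorphM) /=.
ring.
Qed.

Lemma closed_sqrt (F : closedFieldType) (z : F) : exists s, s ^+ 2 = z.
Proof.
have /closed_rootP[s] : size ('X^2 - z%:P : {poly F}) != 1 by rewrite size_XnsubC.
by rewrite rootE !hornerE subr_eq0 => /eqP; exists s.
Qed.

Lemma prim_root_sqr_add1_neq0 (R : idomainType) (d : nat) (q : R) :
  d.-primitive_root q -> d \notin [:: 1%N; 2%N; 4%N] -> q ^+ 2 + 1 != 0.
Proof.
move=> hq hd; apply/eqP => hq2.
have q4 : q ^+ 4 = 1.
  have -> : q ^+ 4 = (q ^+ 2 + 1) * (q ^+ 2 - 1) + 1 by ring.
  by rewrite hq2 mul0r add0r.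
have : (d %| 4)%N by rewrite (prim_order_dvd hq) q4.
by rewrite dvdn_divisors // (negbTE hd).
Qed.

Section QuadCoordinates.
Variables (F : fieldType) (q : F).
Hypothesis q_neq0 : q != 0.

Definition quad_mu (x : quad F) : F := let: (_, b, _, l) := x in b / l.

Definition quad_coords (x : quad F) : seq F :=
  let: (a, b, c, l) := x in [:: c / l; (c * l)^-1; a * b * q; b * q / a].

Definition quad_poly (x : quad F) : {poly F} :=
  \prod_(z <- quad_coords x) ('X - z%:P).

Lemma quad_coords_neg (a b c l : F) :
  quad_coords (- a, - b, - c, - l) = quad_coords (a, b, c, l).
Proof. by rewrite /= !invrN !(mulrNN, mulrN, mulNr) opprK. Qed.

Lemma quad_coords_inv_c (a b c l : F) :
  quad_coords (a, b, c^-1, l) = [:: (c * l)^-1; c / l; a * b * q; b * q / a].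
Proof. by rewrite /= !invfM invrK mulrC. Qed.

Lemma quad_coords_inv_a (a b c l : F) :
  quad_coords (a^-1, b, c, l) = [:: c / l; (c * l)^-1; b * q / a; a * b * q].
Proof. by rewrite /= invrK; congr [:: _; _; _; _]; ring. Qed.

Lemma sqrt_prod_neq0 (a b c l s : F) :
  nonzero4 (a, b, c, l) -> s ^+ 2 = a * b * c * l * q -> s != 0.
Proof.
by case=> a0 b0 c0 l0 hs; rewrite -sqrf_eq0 hs !mulf_neq0.
Qed.

Lemma quad_coords_div (a b c l s : F) :
  nonzero4 (a, b, c, l) -> s ^+ 2 = a * b * c * l * q ->
  quad_coords (a / s, b / s, c / s, l / s) = [:: c / l; a * b * q; (c * l)^-1; b * q / a].
Proof.
move=> x0 hs; have s0 := sqrt_prod_neq0 x0 hs; case: x0 => a0 b0 c0 l0.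
have hq : q = s ^+ 2 / (a * b * c * l) by rewrite hs; field; rewrite a0 b0 c0 l0.
by rewrite /= hq; congr [:: _; _; _; _]; field; rewrite ?a0 ?b0 ?c0 ?l0 ?s0.
Qed.

Lemma gen_step_nonzero4 x y : gen_step q x y -> nonzero4 x <-> nonzero4 y.
Proof.
case=> [a b c l|a b c l|a b c l|a b c l s hs]; rewrite /nonzero4 /= ?oppr_eq0 ?invr_eq0 //.
split=> [x0|].
  have s0 := sqrt_prod_neq0 x0 hs.
  by case: x0 => *; split; rewrite mulf_neq0 ?invr_eq0.
rewrite !mulf_eq0 !invr_eq0 !negb_or.
by case=> /andP[-> ->] /andP[-> _] /andP[-> _] /andP[-> _].
Qed.

Lemma gen_step_invariant x y : gen_step q x y -> nonzero4 x ->
  quad_mu y = quad_mu x /\ quad_poly y = quad_poly x.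
Proof.
rewrite /quad_mu /quad_poly.
case=> [a b c l|a b c l|a b c l|a b c l s hs] x0.
- by rewrite quad_coords_neg /= invrN mulrNN.
- by rewrite quad_coords_inv_c /= !big_cons mulrCA.
- split=> //; rewrite quad_coords_inv_a /= !big_cons.
  by do 2!congr (_ * _); rewrite mulrCA.
have s0 := sqrt_prod_neq0 x0 hs.
rewrite quad_coords_div //= !big_cons; split; last by congr (_ * _); rewrite mulrCA.
by have [_ _ _ l0] := x0; field; rewrite s0 l0.
Qed.

Lemma approx_nonzero4 x y : approx q x y -> nonzero4 x <-> nonzero4 y.
Proof.
elim=> [{}x {}y /gen_step_nonzero4 // | // | {}x {}y _ h | {}x {}y z _ h1 _ h2].
  exact: iff_sym h.
exact: iff_trans h1 h2.
Qed.

Lemma approx_invariant x y : approx q x y -> nonzero4 x ->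
  quad_mu y = quad_mu x /\ quad_poly y = quad_poly x.
Proof.
elim=> [{}x {}y /gen_step_invariant // | // | {}x {}y xy IH y0 | {}x {}y z xy IH1 _ IH2 x0].
  by have [-> ->] := IH ((approx_nonzero4 xy).2 y0).
by have [-> ->] := IH2 ((approx_nonzero4 xy).1 x0); apply: IH1.
Qed.

Lemma approx_of_quad_coords x y : nonzero4 x -> nonzero4 y ->
  quad_mu x = quad_mu y -> quad_coords x = quad_coords y -> approx q x y.
Proof.
case: y => [[[a' b'] c'] l']; case: x => [[[a b] c] l]; rewrite /nonzero4 /=.
move=> [a0 b0 c0 l0] [a0' b0' c0' l0'] hmu [h1 h2 h3 _].
set e := l' / l.
have e2 : e ^+ 2 = 1.
  transitivity ((c / l * (c * l)^-1) / (c' / l' * (c' * l')^-1)).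
    by rewrite /e; field; rewrite oner_neq0 c0 l0 c0' l0'.
  by rewrite h1 h2 divff // !(mulf_neq0, invr_neq0).
have e0 : e != 0 by rewrite mulf_neq0 ?invr_eq0.
have hb : b' = e * b.
  by transitivity (b' / l' * l'); [field | rewrite -hmu /e; field].
have hc : c' = e * c.
  by transitivity (c' / l' * l'); [field | rewrite -h1 /e; field].
have ha : a' = a / e.
  transitivity (a' * b' * q / (b' * q)); first by field; rewrite b0' q_neq0.
  by rewrite -h3 hb /e; field; rewrite ?b0 ?l0 ?l0' ?q_neq0.
have hl : l' = e * l by rewrite /e; field.
rewrite ha hb hc hl.
have : (e == 1) || (e == -1) by rewrite -eqf_sqr e2 expr1n.
case/orP => /eqP ->.
  by rewrite invr1 !(mulr1, mul1r); apply: rst_refl.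
by rewrite invrN1 mulrN1 !mulN1r; apply/rst_step/step_neg.
Qed.

Hypothesis q2_add1_neq0 : q ^+ 2 + 1 != 0.

Definition feasible_poly (mu phi ws we : F) : {poly F} :=
  let e1 := (we * q - q ^+ 2 * phi) / (q ^+ 2 + 1) in
  Poly [:: (mu * q) ^+ 2; - (mu ^+ 2 * (we * q - e1)); mu * q * ws - mu ^+ 2 - q ^+ 2;
           - e1; 1].

Lemma feasibleE x (mu phi ws we : F) : nonzero4 x ->
  feasible q x mu phi ws we <-> quad_mu x = mu /\ quad_poly x = feasible_poly mu phi ws we.
Proof.
case: x => [[[a b] c] l]; rewrite /nonzero4 /= => -[a0 b0 c0 l0].
rewrite /quad_poly /feasible_poly prod_XsubC4; split.
  case=> -> -> -> ->; split=> //.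
  by congr (Poly [:: _; _; _; _; _]); field; rewrite ?a0 ?b0 ?c0 ?l0 ?q_neq0 ?q2_add1_neq0.
case=> <- /(congr1 polyseq); rewrite !(PolyK (c := 0)) ?oner_neq0 //.
set E1 := (we * q - q ^+ 2 * phi) / (q ^+ 2 + 1).
case=> _ /oppr_inj h3 h2 /oppr_inj h1.
have hwe : we = (a + a^-1) * (b + b^-1) + (c + c^-1) * (l * q + l^-1 / q).
  transitivity (((b / l) ^+ 2 * (we * q - E1) / (b / l) ^+ 2 + E1) / q).
    by field; rewrite ?b0 ?l0 ?q_neq0.
  by rewrite -h3 -h1; field; rewrite ?a0 ?b0 ?c0 ?l0 ?q_neq0.
split=> //.
- transitivity ((we * q - (q ^+ 2 + 1) * E1) / q ^+ 2).
    by rewrite /E1; field; rewrite ?q_neq0 ?q2_add1_neq0.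
  by rewrite -h1 hwe; field; rewrite ?a0 ?b0 ?c0 ?l0 ?q_neq0.
transitivity ((b / l * q * ws - (b / l) ^+ 2 - q ^+ 2 + (b / l) ^+ 2 + q ^+ 2) / (b / l * q)).
  by field; rewrite ?b0 ?l0 ?q_neq0.
by rewrite -h2; field; rewrite ?a0 ?b0 ?c0 ?l0 ?q_neq0.
Qed.

End QuadCoordinates.

Section ClosedField.
Variables (F : closedFieldType) (q : F).
Hypotheses (q_neq0 : q != 0) (q2_add1_neq0 : q ^+ 2 + 1 != 0).

Lemma approx_swap_quad_coords x s1 u v s2 : nonzero4 x ->
  quad_coords q x = s1 ++ u :: v :: s2 ->
  exists y, [/\ approx q x y, nonzero4 y & quad_coords q y = s1 ++ v :: u :: s2].
Proof.
move=> x0; have step y : gen_step q x y -> approx q x y /\ nonzero4 y.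
  by move=> xy; split; [apply: rst_step | exact: (gen_step_nonzero4 q_neq0 xy).1].
case: x x0 step => [[[a b] c] l] x0 step.
case: s1 => [|z1 [|z2 [|z3 s1]]] /=.
- case=> <- <- <-; have [xy y0] := step _ (step_12 q a b c l).
  by eexists; split; [exact: xy | exact: y0 | rewrite quad_coords_inv_c].
- have [s hs] := closed_sqrt (a * b * c * l * q).
  case=> <- <- <- <-; have [xy y0] := step _ (step_23 hs).
  by eexists; split; [exact: xy | exact: y0 | rewrite quad_coords_div].
- case=> <- <- <- <- <-; have [xy y0] := step _ (step_34 q a b c l).
  by eexists; split; [exact: xy | exact: y0 | rewrite quad_coords_inv_a].
by case=> _ _ _ /(congr1 size); rewrite size_cat /= !addnS.
Qed.

Lemma approx_perm_quad_coords x t : nonzero4 x -> perm_eq (quad_coords q x) t ->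
  exists y, [/\ approx q x y, nonzero4 y & quad_coords q y = t].
Proof.
move=> x0 xt.
pose P t := exists y, [/\ approx q x y, nonzero4 y & quad_coords q y = t].
apply: (adjacent_swap_closed_perm (P := P) _ xt); last by exists x; split=> //; apply: rst_refl.
move=> s1 u v s2 [y [xy y0 hy]].
have [z [yz z0 hz]] := approx_swap_quad_coords y0 hy.
by exists z; split=> //; apply: rst_trans yz.
Qed.

Lemma approx_of_invariant x y : nonzero4 x -> nonzero4 y ->
  quad_mu y = quad_mu x -> quad_poly q y = quad_poly q x -> approx q x y.
Proof.
move=> x0 y0 hmu /esym/prod_XsubC_eq/(approx_perm_quad_coords x0) [z [xz z0 hz]].
have [hz_mu _] := approx_invariant q_neq0 xz x0.
apply: rst_trans xz (approx_of_quad_coords q_neq0 z0 y0 _ hz).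
by rewrite hz_mu hmu.
Qed.

Lemma exists_quad_coords (mu x1 x2 x3 x4 : F) : mu != 0 ->
  x1 * x2 * x3 * x4 = (mu * q) ^+ 2 ->
  exists x, [/\ nonzero4 x, quad_mu x = mu & quad_coords q x = [:: x1; x2; x3; x4]].
Proof.
move=> mu0 hprod; have : x1 * x2 * x3 * x4 != 0 by rewrite hprod sqrf_eq0 mulf_neq0.
rewrite !mulf_eq0 !negb_or => /andP[/andP[/andP[x10 x20] x30] x40].
have [l hl] := closed_sqrt (x1 * x2)^-1.
have l0 : l != 0 by rewrite -sqrf_eq0 hl invr_eq0 mulf_neq0.
exists (x3 / (mu * l * q), mu * l, x1 * l, l); split=> /=.
- by split; rewrite /= ?(mulf_neq0, invr_neq0).
- by field.
congr [:: _; _; _; _]; first by field.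
- by rewrite -[x1 * l * l]mulrA -expr2 hl; field; rewrite x10 x20 oner_neq0.
- by field; rewrite ?mu0 ?l0 ?q_neq0.
transitivity ((mu * q) ^+ 2 * l ^+ 2 / x3); first by field; rewrite ?mu0 ?l0 ?x30 ?q_neq0.
by rewrite hl -hprod; field; rewrite x10 x20 x30.
Qed.

Lemma feasible_exists (mu phi ws we : F) : mu != 0 ->
  exists x, nonzero4 x /\ feasible q x mu phi ws we.
Proof.
move=> mu0; have [r hr] := closed_field_poly_normal (feasible_poly q mu phi ws we).
have lc : lead_coef (feasible_poly q mu phi ws we) = 1.
  by rewrite lead_coefE /feasible_poly (PolyK (c := 0)) ?oner_neq0.
rewrite lc scale1r in hr.
have /eqP : size (feasible_poly q mu phi ws we) = (size r).+1.
  by rewrite hr (size_prod_XsubC _ id).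
rewrite /feasible_poly (PolyK (c := 0)) ?oner_neq0 //.
case: r hr => [|x1 [|x2 [|x3 [|x4 [|? ?]]]]] // hr _.
have hprod : x1 * x2 * x3 * x4 = (mu * q) ^+ 2.
  move: hr => /(congr1 polyseq).
  by rewrite prod_XsubC4 /feasible_poly !(PolyK (c := 0)) ?oner_neq0 // => -[].
have [x [x0 hmu hx]] := exists_quad_coords mu0 hprod.
exists x; split=> //; apply/(feasibleE q_neq0 q2_add1_neq0 _ _ _ _ x0).
by rewrite /quad_poly hx hmu -hr.
Qed.

Lemma approx_iff_feasible x y (mu phi ws we : F) :
  nonzero4 x -> feasible q x mu phi ws we -> nonzero4 y ->
  approx q x y <-> feasible q y mu phi ws we.
Proof.
move=> x0 /(feasibleE q_neq0 q2_add1_neq0 _ _ _ _ x0) [hmu hp] y0.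
rewrite (feasibleE q_neq0 q2_add1_neq0 _ _ _ _ y0); split.
  by move=> /(approx_invariant q_neq0) -[] // -> ->.
by case=> hmu' hp'; apply: approx_of_invariant => //; rewrite ?hmu ?hp.
Qed.

End ClosedField.

Theorem theorem5p2 (F : closedFieldType) (q : F) (d : nat)
    (hq : d.-primitive_root q) (hd : d \notin [:: 1%N; 2%N; 4%N])
    (mu phi ws we : F) (hmu : mu != 0) :
  (exists x : quad F, nonzero4 x /\ feasible q x mu phi ws we) /\
  (forall x : quad F, nonzero4 x -> feasible q x mu phi ws we ->
     forall y : quad F, nonzero4 y ->
       (approx q x y <-> feasible q y mu phi ws we)).
Proof.
have q0 : q != 0 by rewrite (prim_root_eq0 hq) -lt0n (prim_order_gt0 hq).
have q2 := prim_root_sqr_add1_neq0 hq hd.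
split; first exact: feasible_exists.
by move=> x x0 hx y y0; apply: approx_iff_feasible.
Qed.
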